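(* Let $(D,\mathrm{left},\mathrm{right})$ be an interval poset, and let $\le$ be the partial order on $\max(D)$ given by $a\le b$ iff $a=\mathrm{left}(z)$ and $b=\mathrm{right}(z)$ for some $z\in D$. Let $\mathbf{I}(\max(D),\le)$ be the set of closed intervals $[a,b]=\{p\in\max(D): a\le p\le b\}$ with $a\le b$, ordered by reverse inclusion. Then $$\phi:D\to\mathbf{I}(\max(D),\le),\qquad x\mapsto[\mathrm{left}(x),\mathrm{right}(x)]$$ is an order isomorphism.
   Context: For a poset $(D,\sqsubseteq)$, $\max(D)$ is its set of maximal elements and $x\sqcap y$ denotes the infimum of $\{x,y\}$. An interval poset is a poset $D$ with two functions $\mathrm{left},\mathrm{right}:D\to\max(D)$ such that (only the infima named here are assumed to exist): (i) for all $x\in D$, $x=\mathrm{left}(x)\sqcap\mathrm{right}(x)$; (ii) for all $x,y\in D$, if $\mathrm{right}(x)=\mathrm{left}(y)$ then $x\sqcap y$ exists and $\mathrm{left}(x\sqcap y)=\mathrm{left}(x)$, $\mathrm{right}(x\sqcap y)=\mathrm{right}(y)$; (iii) for each $x\in D$ and each $p\in\max(D)$ with $x\sqsubseteq p$, the infima $\mathrm{left}(x)\sqcap p$ and $p\sqcap\mathrm{right}(x)$ exist and $\mathrm{left}(\mathrm{left}(x)\sqcap p)=\mathrm{left}(x)$, $\mathrm{right}(\mathrm{left}(x)\sqcap p)=p$, $\mathrm{left}(p\sqcap\mathrm{right}(x))=p$, $\mathrm{right}(p\sqcap\mathrm{right}(x))=\mathrm{right}(x)$. The relation $\le$ is a partial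 order on $\max(D)$. *)

Definition is_partial_order {D : Type} (le : D -> D -> Prop) : Prop :=
  (forall x, le x x) /\
  (forall x y, le x y -> le y x -> x = y) /\
  (forall x y z, le x y -> le y z -> le x z).

Definition is_max {D : Type} (le : D -> D -> Prop) (p : D) : Prop :=
  forall q, le p q -> q = p.

(** [z] is the infimum of [{x, y}] (so "x ⊓ y exists and equals z"). *)
Definition is_inf {D : Type} (le : D -> D -> Prop) (x y z : D) : Prop :=
  le z x /\ le z y /\ (forall w, le w x -> le w y -> le w z).

Record interval_poset {D : Type} (le : D -> D -> Prop) (left right : D -> D)
  : Prop := {
  ip_order : is_partial_order le;
  ip_left_max : forall x, is_max le (left x);
  ip_right_max : forall x, is_max le (right x);
  ip_i : forall x, is_inf le (left x) (right x) x;
  ip_ii : forall x y, right x = left y ->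
    exists z, is_inf le x y z /\ left z = left x /\ right z = right y;
  ip_iii : forall x p, is_max le p -> le x p ->
    (exists z, is_inf le (left x) p z /\ left z = left x /\ right z = p) /\
    (exists w, is_inf le p (right x) w /\ left w = p /\ right w = right x)
}.

Definition mle {D : Type} (left right : D -> D) (a b : D) : Prop :=
  exists z, a = left z /\ b = right z.

Definition closed_interval {D : Type} (le : D -> D -> Prop) (left right : D -> D)
  (a b : D) : D -> Prop :=
  fun p => is_max le p /\ mle left right a p /\ mle left right p b.

Definition set_eq {D : Type} (S T : D -> Prop) : Prop := forall p, S p <-> T p.
Definition set_sub {D : Type} (S T : D -> Prop) : Prop := forall p, S p -> T p.

Definition in_I {D : Type} (le : D -> D -> Prop) (left right : D -> D)
  (S : D -> Prop) : Prop :=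
  exists a b, is_max le a /\ is_max le b /\ mle left right a b /\
    set_eq S (closed_interval le left right a b).

Definition phi {D : Type} (le : D -> D -> Prop) (left right : D -> D)
  (x : D) : D -> Prop :=
  closed_interval le left right (left x) (right x).


(* An element x is the meet of its endpoints, so it is determined by the pair
   (left x, right x).  The relation ≤ on max(D) is transitive because witnesses
   can be glued by (ii), and x ⊑ y pushes the endpoints inwards by (iii).
   Conversely, if q is maximal with left x ≤ q ≤ right x, gluing the two
   witnesses by (ii) gives an element with the endpoints of x, hence x itself,
   lying below the first witness and therefore below its right endpoint q.
   Applied to q = left y and q = right y this gives x ⊑ left y ⊓ right y = y. *)

Section IntervalPoset.

Variables (D : Type) (le : D -> D -> Prop) (left right : D -> D).
Hypothesis HD : interval_poset le left right.

Let le_antisym : forall x y, le x y -> le y x -> x = y :=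
  proj1 (proj2 (ip_order _ _ _ HD)).
Let le_trans : forall x y z, le x y -> le y z -> le x z :=
  proj2 (proj2 (ip_order _ _ _ HD)).

Lemma le_left x : le x (left x).
Proof. exact (proj1 (ip_i _ _ _ HD x)). Qed.

Lemma le_right x : le x (right x).
Proof. exact (proj1 (proj2 (ip_i _ _ _ HD x))). Qed.

Lemma le_meet_left_right x w : le w (left x) -> le w (right x) -> le w x.
Proof. exact (proj2 (proj2 (ip_i _ _ _ HD x)) w). Qed.

Lemma eq_of_left_right x y : left x = left y -> right x = right y -> x = y.
Proof.
  intros El Er. apply le_antisym.
  - apply le_meet_left_right.
    + rewrite <- El. apply le_left.
    + rewrite <- Er. apply le_right.
  - apply le_meet_left_right.
    + rewrite El. apply le_left.
    + rewrite Er. apply le_right.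
Qed.

Lemma mle_witness x : mle left right (left x) (right x).
Proof. exists x. split; reflexivity. Qed.

Lemma mle_refl p : is_max le p -> mle left right p p.
Proof.
  intros Hp. exists p.
  split; symmetry; apply Hp; [apply le_left | apply le_right].
Qed.

Lemma mle_trans a b c :
  mle left right a b -> mle left right b c -> mle left right a c.
Proof.
  intros [z1 [-> ->]] [z2 [E ->]].
  destruct (ip_ii _ _ _ HD z1 z2 E) as [z [_ [Hl Hr]]].
  exists z. split; congruence.
Qed.

Lemma le_mle_left x y : le x y -> mle left right (left x) (left y).
Proof.
  intros Hxy.
  destruct (ip_iii _ _ _ HD x (left y) (ip_left_max _ _ _ HD y)
              (le_trans _ _ _ Hxy (le_left y))) as [[z [_ [Hl Hr]]] _].
  exists z. split; congruence.
Qed.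

Lemma le_mle_right x y : le x y -> mle left right (right y) (right x).
Proof.
  intros Hxy.
  destruct (ip_iii _ _ _ HD x (right y) (ip_right_max _ _ _ HD y)
              (le_trans _ _ _ Hxy (le_right y))) as [_ [w [_ [Hl Hr]]]].
  exists w. split; congruence.
Qed.

Lemma le_of_mle_between x q :
  mle left right (left x) q -> mle left right q (right x) -> le x q.
Proof.
  intros [z [Ezl Ezr]] [z' [Ez'l Ez'r]].
  assert (Hglue : right z = left z') by congruence.
  destruct (ip_ii _ _ _ HD z z' Hglue) as [w [[Hwz _] [Hwl Hwr]]].
  assert (Hwx : w = x) by (apply eq_of_left_right; congruence).
  subst w. rewrite Ezr. exact (le_trans _ _ _ Hwz (le_right z)).
Qed.

Lemma phi_left x : phi le left right x (left x).
Proof.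
  split; [apply (ip_left_max _ _ _ HD) | split].
  - apply mle_refl, (ip_left_max _ _ _ HD).
  - apply mle_witness.
Qed.

Lemma phi_right x : phi le left right x (right x).
Proof.
  split; [apply (ip_right_max _ _ _ HD) | split].
  - apply mle_witness.
  - apply mle_refl, (ip_right_max _ _ _ HD).
Qed.

Lemma phi_in_I x : in_I le left right (phi le left right x).
Proof.
  exists (left x), (right x).
  split; [apply (ip_left_max _ _ _ HD) | split; [apply (ip_right_max _ _ _ HD) | split]].
  - apply mle_witness.
  - intros p. exact (iff_refl _).
Qed.

Lemma phi_sub_of_le x y :
  le x y -> set_sub (phi le left right y) (phi le left right x).
Proof.
  intros Hxy p [Hp [Hlp Hpr]].
  split; [exact Hp | split].
  - exact (mle_trans _ _ _ (le_mle_left _ _ Hxy) Hlp).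
  - exact (mle_trans _ _ _ Hpr (le_mle_right _ _ Hxy)).
Qed.

Lemma le_of_phi_sub x y :
  set_sub (phi le left right y) (phi le left right x) -> le x y.
Proof.
  intros Hsub.
  destruct (Hsub _ (phi_left y)) as [_ [Hl1 Hl2]].
  destruct (Hsub _ (phi_right y)) as [_ [Hr1 Hr2]].
  apply le_meet_left_right; apply le_of_mle_between; assumption.
Qed.

Lemma phi_inj x y :
  set_eq (phi le left right x) (phi le left right y) -> x = y.
Proof.
  intros Heq. apply le_antisym; apply le_of_phi_sub; intros p; apply Heq.
Qed.

Lemma phi_surj S : in_I le left right S -> exists x, set_eq (phi le left right x) S.
Proof.
  intros [a [b [_ [_ [[z [-> ->]] Heq]]]]].
  exists z. intros p. exact (iff_sym (Heq p)).
Qed.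

End IntervalPoset.

Theorem mainTheorem8 (D : Type) (le : D -> D -> Prop) (left right : D -> D)
  (HD : interval_poset le left right) :
  (forall x, in_I le left right (phi le left right x)) /\
  (forall x y, le x y <-> set_sub (phi le left right y) (phi le left right x)) /\
  (forall x y, set_eq (phi le left right x) (phi le left right y) -> x = y) /\
  (forall S, in_I le left right S ->
     exists x, set_eq (phi le left right x) S).
Proof.
  split; [exact (phi_in_I _ _ _ _ HD) | split; [| split]].
  - intros x y. split.
    + exact (phi_sub_of_le _ _ _ _ HD x y).
    + exact (le_of_phi_sub _ _ _ _ HD x y).
  - exact (phi_inj _ _ _ _ HD).
  - exact (phi_surj D le left right).
Qed.
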